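(* Suppose $\sigma$ is an automorphism of $D$ and $f\in D[t;\sigma,\delta]$ is monic of degree $m\ge2$ and irreducible. (i) If $D\subseteq\mathrm{Nuc}_r(S_f)$ then $S_f$ is a division algebra. (ii) If there is a subalgebra $B\subseteq D$ such that $B\subseteq\mathrm{Nuc}_r(S_f)$ and $D$ is free of finite rank as a right $B$-module, then $S_f$ is a division algebra.
   Context: $D$ is an associative division ring, $\sigma$ a ring endomorphism of $D$, $\delta$ a left $\sigma$-derivation. $D[t;\sigma,\delta]$ is the skew polynomial ring with $ta=\sigma(a)t+\delta(a)$. For monic $f$ of degree $m$, $S_f$ is the set of polynomials of degree $<m$ with multiplication $g\circ h=$ remainder of $gh$ upon right division by $f$; $D$ is identified with the constants. $\mathrm{Nuc}_r(S_f)=\{x: (yz)x=y(zx)\ \forall y,z\in S_f\}$. $f$ irreducible means not a unit and no factorization $f=gh$ with $\deg g,\deg h<\deg f$. $S_f$ is a division algebra if left and right multiplication by every nonzero element are bijective. *)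

(* Skew polynomial ring D[t; sigma, delta] over a division ring D,
   represented additively by coefficient lists {poly D} (p = \sum_i p_i t^i,
   coefficients on the LEFT), with the skew multiplication defined below. *)
From HB Require Import structures.
From mathcomp Require Import all_boot all_order all_algebra.
Set Implicit Arguments. Unset Strict Implicit. Unset Printing Implicit Defensive.
Import Order.TTheory GRing.Theory.
Local Open Scope ring_scope.

Section Skew.
Variables (D : unitRingType) (sigma : {rmorphism D -> D}) (delta : D -> D).

Definition division_ring : Prop := forall x : D, x != 0 -> x \is a GRing.unit.

(* delta is a left sigma-derivation: t a = sigma(a) t + delta(a) *)
Definition left_sigma_derivation : Prop :=
  (forall x y, delta (x + y) = delta x + delta y) /\
  (forall x y, delta (x * y) = sigma x * delta y + delta x * y).

(* left multiplication by t:  t * (sum q_k t^k) = sum (sigma(q_k) t^(k+1) + delta(q_k) t^k) *)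
Definition tmul (q : {poly D}) : {poly D} :=
  map_poly sigma q * 'X + map_poly delta q.

Definition smul (p q : {poly D}) : {poly D} :=
  \sum_(i < size p) p`_i *: iter i tmul q.

Definition sunit (f : {poly D}) : Prop :=
  exists g, smul f g = 1 /\ smul g f = 1.

Definition sirreducible (f : {poly D}) : Prop :=
  ~ sunit f /\
  ~ (exists g h : {poly D}, f = smul g h /\ (size g < size f)%N /\ (size h < size f)%N).

Fixpoint rmodf (f : {poly D}) (n : nat) (g : {poly D}) : {poly D} :=
  match n with
  | 0 => g
  | n'.+1 =>
    if (size g < size f)%N then g
    else rmodf f n' (g - smul (lead_coef g *: 'X^(size g - size f)) f)
  end.

Definition srmod (g f : {poly D}) : {poly D} := rmodf f (size g) g.

Definition mulSf (f g h : {poly D}) : {poly D} := srmod (smul g h) f.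

Definition inSf (f g : {poly D}) : bool := (size g < size f)%N.

Definition in_right_nucleus (f x : {poly D}) : Prop :=
  inSf f x /\
  forall y z, inSf f y -> inSf f z ->
    mulSf f (mulSf f y z) x = mulSf f y (mulSf f z x).

Definition Sf_division (f : {poly D}) : Prop :=
  forall a, inSf f a -> a != 0 ->
    (forall b, inSf f b -> exists! x, inSf f x /\ mulSf f a x = b) /\
    (forall b, inSf f b -> exists! x, inSf f x /\ mulSf f x a = b).

Definition base_field (c : D) : Prop :=
  (forall x, c * x = x * c) /\ sigma c = c /\ delta c = 0.

Definition is_subalgebra (B : {pred D}) : Prop :=
  1 \in B /\
  (forall x y, x \in B -> y \in B -> x + y \in B) /\
  (forall x, x \in B -> - x \in B) /\
  (forall x y, x \in B -> y \in B -> x * y \in B) /\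
  (forall c x, base_field c -> x \in B -> c * x \in B).

Definition free_finite_right (B : {pred D}) : Prop :=
  exists (n : nat) (d : 'I_n -> D),
    (forall x : D, exists b : 'I_n -> D,
        (forall i, b i \in B) /\ x = \sum_(i < n) d i * b i) /\
    (forall b : 'I_n -> D, (forall i, b i \in B) ->
        \sum_(i < n) d i * b i = 0 -> forall i, b i = 0).

End Skew.

(* The right multiplication R_a : x |-> x a of S_f is left D-linear, and when B
   lies in the right nucleus the left multiplication L_a : x |-> a x is right
   B-linear.  S_f is a finite-dimensional left D-vector space with basis
   1, t, ..., t^(m-1), and, because sigma is onto, every element of S_f is a sum
   of terms t^i e_i, so S_f is spanned over B by the t^i d_j when D is free over B
   with basis (d_j).  Irreducibility of f excludes zero divisors: if h is nonzero
   of degree < m, the left ideal D[t] h + D[t] f contains 1, and if moreover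
   g h lies in D[t] f this makes R_h surjective, hence injective on S_f, so g = 0.
   Thus L_a and R_a are injective linear maps of finite-dimensional spaces over
   division rings, hence bijective.  Part (i) is the case B = D. *)

From HB Require Import structures.
From mathcomp Require Import all_boot all_order all_algebra.
From Stdlib Require Import Classical.
Set Implicit Arguments. Unset Strict Implicit. Unset Printing Implicit Defensive.
Import GRing.Theory.
Local Open Scope ring_scope.

Lemma ex_minimal (P : nat -> Prop) :
  (exists n, P n) -> exists n, P n /\ forall k, P k -> (n <= k)%N.
Proof.
move=> [n Pn]; apply: NNPP => no_min.
have noP m k : (k <= m)%N -> ~ P k.
  elim: m k => [|m IHm] k le_km Pk; apply: no_min; exists k; split=> // j Pj.
    by move: le_km; rewrite leqn0 => /eqP ->.
  rewrite leqNgt; apply/negP => lt_jk.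
  by apply: (IHm j) Pj; rewrite -ltnS (leq_trans lt_jk).
exact: (noP n n (leqnn n) Pn).
Qed.

Lemma ex_maximal (P : nat -> Prop) n :
  P 0%N -> (forall k, P k -> (k <= n)%N) -> exists k, P k /\ ~ P k.+1.
Proof.
move=> P0 bounded; apply: NNPP => no_max.
suff /bounded : P n.+1 by rewrite ltnn.
elim: n.+1 => // k Pk; apply: NNPP => nPk; apply: no_max; by exists k.
Qed.

(** * Linear algebra over a division subring *)

Record right_action (K : nzRingType) (V : zmodType) := RightAction {
  ract :> V -> K -> V;
  ractDl : forall c, {morph ract^~ c : u v / u + v};
  ractBr : forall u, {morph ract u : c d / c - d};
  ractA : forall u c d, ract (ract u c) d = ract u (c * d);
  ract1 : forall u, ract u 1 = u
}.

Section RightVectorSpace.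
Variables (K : unitRingType) (B : {pred K}).
Hypothesis K_division : division_ring K.
Hypothesis B_divring : divring_closed B.
HB.instance Definition _ := GRing.isDivringClosed.Build K B B_divring.

Lemma homogeneous_system m n (a : 'I_m -> 'I_n -> K) :
  (n < m)%N -> (forall i j, a i j \in B) ->
  exists c : 'I_m -> K,
    [/\ forall i, c i \in B, exists i, c i != 0 & forall j, \sum_i a i j * c i = 0].
Proof.
elim: n m a => [|n IHn] [|m] // a lt_nm aB.
  by exists (fun=> 1); split=> [i|| []//]; [exact: rpred1 | exists ord0; exact: oner_neq0].
have sum_lift (F : 'I_m.+1 -> K) : \sum_i F i = F ord_max + \sum_(i < m) F (lift ord_max i).
  exact: bigD1_ord.
have [j0 a_j0 | a0] := pickP (fun j => a ord_max j != 0); last first.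
  exists (fun i => (i == ord_max)%:R); split=> [i||j].
  - by case: (_ == _); rewrite ?rpred1 ?rpred0.
  - by exists ord_max; rewrite eqxx oner_neq0.
  rewrite sum_lift eqxx mulr1 big1 ?addr0; first by apply/eqP/negbFE/a0.
  by move=> i _; rewrite eq_sym (negbTE (neq_lift _ _)) mulr0.
(* eliminate the last unknown using equation [j0] *)
pose p := (a ord_max j0)^-1.
have ap : a ord_max j0 * p = 1 by apply: mulrV; apply: K_division.
pose a' i j :=
  a (lift ord_max i) (lift j0 j) - a ord_max (lift j0 j) * (p * a (lift ord_max i) j0).
have a'B i j : a' i j \in B by rewrite rpredB ?rpredM ?rpredV.
have [c' [c'B [i0 nz_c'i0] c'sol]] := IHn m a' lt_nm a'B.
pose s := \sum_i a (lift ord_max i) j0 * c' i.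
exists (fun i => if unlift ord_max i is Some i' then c' i' else - (p * s)).
rewrite /=; split=> [i|| j].
- case: unliftP => [i' _|_] //.
  by rewrite rpredN rpredM ?rpredV ?aB // rpred_sum // => i' _; rewrite rpredM.
- by exists (lift ord_max i0); rewrite liftK.
rewrite sum_lift unlift_none; under eq_bigr => i _ do rewrite liftK.
case: (unliftP j0 j) => [j' ->|->]; last by rewrite mulrN mulrA ap mul1r addNr.
have := c'sol j'; rewrite /a' /=.
under eq_bigr => i _ do rewrite mulrBl -!mulrA.
by rewrite sumrB -!mulr_sumr -/s addrC mulrN.
Qed.

Variables (V : zmodType) (act : right_action K V).
HB.instance Definition _ u := GRing.isZmodMorphism.Build K V (act u) (ractBr act u).

Lemma ract0l c : act 0 c = 0.
Proof. by apply: (addrI (act 0 c)); rewrite -ractDl !addr0. Qed.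

Lemma ract_suml (I : finType) (F : I -> V) c : act (\sum_i F i) c = \sum_i act (F i) c.
Proof. exact: (big_morph (act^~ c) (ractDl act c) (ract0l c)). Qed.

Lemma ractNl u c : act (- u) c = - act u c.
Proof. by rewrite -{1}[u](ract1 act) -raddfN ractA mulN1r raddfN. Qed.

Definition combination (I : finType) (u : I -> V) (c : I -> K) : V :=
  \sum_i act (u i) (c i).

Definition spanning (S : {pred V}) (I : finType) (u : I -> V) :=
  forall x, x \in S -> exists2 c : I -> K, (forall i, c i \in B) & x = combination u c.

Definition independent (I : finType) (u : I -> V) :=
  forall c : I -> K, (forall i, c i \in B) -> combination u c = 0 -> forall i, c i = 0.

Definition extend k (w : 'I_k -> V) (y : V) (i : 'I_k.+1) : V :=
  if unlift ord_max i is Some j then w j else y.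

Lemma combination_extend k (w : 'I_k -> V) y c :
  combination (extend w y) c = combination w (fun i => c (lift ord_max i)) + act y (c ord_max).
Proof.
rewrite /combination (bigD1_ord ord_max) //= addrC /extend unlift_none.
by under eq_bigr => i _ do rewrite liftK.
Qed.

Lemma independent_card_le (S : {pred V}) (I : finType) (u : I -> V) k (w : 'I_k -> V) :
  spanning S u -> (forall i, w i \in S) -> independent w -> (k <= #|I|)%N.
Proof.
move=> span_u wS indep_w; rewrite leqNgt; apply/negP => lt_I_k.
have [a aB w_a] := fin_all_exists2 (fun i => span_u _ (wS i)).
have [c [cB [i0 /eqP nz_ci0] c_sol]] :=
  homogeneous_system (a := fun i j => a i (enum_val j)) lt_I_k (fun i j => aB i _).
apply/nz_ci0/(indep_w c cB).
rewrite /combination; under eq_bigr => i _ do rewrite w_a /combination ract_suml.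
rewrite exchange_big big1 // => j _.
under eq_bigr => i _ do rewrite ractA.
by rewrite -raddf_sum -[j]enum_rankK c_sol raddf0.
Qed.

Section LinearMap.
Variables (S : {pred V}) (phi : V -> V).
Hypothesis S_zmod : zmod_closed S.
HB.instance Definition _ := GRing.isZmodClosed.Build V S S_zmod.
Hypothesis S_act : {in S, forall x c, c \in B -> act x c \in S}.
Hypothesis phi_sub : {morph phi : x y / x - y}.
HB.instance Definition _ := GRing.isZmodMorphism.Build V V phi phi_sub.
Hypothesis phiS : {homo phi : x / x \in S}.
Hypothesis phi_act : {in S, forall x c, c \in B -> phi (act x c) = act (phi x) c}.

Lemma combination_in (I : finType) (w : I -> V) c :
  (forall i, w i \in S) -> (forall i, c i \in B) -> combination w c \in S.
Proof. by move=> wS cB; apply: rpred_sum => i _; apply: S_act. Qed.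

Lemma phi_combination (I : finType) (w : I -> V) c :
  (forall i, w i \in S) -> (forall i, c i \in B) ->
  phi (combination w c) = combination (phi \o w) c.
Proof.
by move=> wS cB; rewrite /combination raddf_sum; apply: eq_bigr => i _ /=; rewrite phi_act.
Qed.

Lemma injective_surjective (I : finType) (u : I -> V) :
  spanning S u -> {in S, forall x, phi x = 0 -> x = 0} ->
  forall y, y \in S -> exists! x, x \in S /\ phi x = y.
Proof.
move=> span_u phi_inj y yS.
have [k [[w [wS indep_w]] not_indep]] : exists k,
    (exists w : 'I_k -> V, (forall i, w i \in S) /\ independent w) /\
    ~ exists w : 'I_k.+1 -> V, (forall i, w i \in S) /\ independent w.
  apply: (@ex_maximal _ #|I|) => [|k [w [wS indep_w]]].
    by exists (fun=> 0); split=> [_|c _ _ []] //; exact: rpred0.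
  exact: independent_card_le span_u wS indep_w.
(* [phi \o w] is again independent of maximal length, so [y] depends on it *)
have [x [xS phix]] : exists x, x \in S /\ phi x = y.
  apply: NNPP => y_not_image; apply: not_indep; exists (extend (phi \o w) y); split.
    by move=> i; rewrite /extend; case: unliftP => [j _|_] //=; apply: phiS.
  move=> c cB; rewrite combination_extend => rel.
  have [c0|nz_c] := eqVneq (c ord_max) 0.
    rewrite c0 raddf0 addr0 -phi_combination // in rel.
    have {}rel := phi_inj _ (combination_in wS (fun j => cB _)) rel.
    move=> i; case: (unliftP ord_max i) => [j ->|->] //.
    exact: indep_w (fun j => cB _) rel j.
  exfalso; apply: y_not_image.
  pose d := (c ord_max)^-1.
  exists (combination w (fun i => - (c (lift ord_max i) * d))); split.
    by apply: combination_in => // i; rewrite rpredN rpredM ?rpredV.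
  rewrite phi_combination => [|//|i]; last by rewrite rpredN rpredM ?rpredV.
  rewrite /combination; under eq_bigr => i _ do rewrite raddfN /= -ractA.
  rewrite sumrN -ract_suml -/(combination _ _) -ractNl.
  move/eqP: rel; rewrite addr_eq0 => /eqP ->.
  by rewrite opprK ractA mulrV ?ract1 //; apply: K_division.
exists x; split=> // x' [x'S phix']; apply/eqP; rewrite -subr_eq0; apply/eqP.
by apply: phi_inj; rewrite ?rpredB // raddfB /= phix phix' subrr.
Qed.

Lemma surjective_injective n (u r : 'I_n -> V) :
  spanning S u -> independent u -> (forall i, r i \in S) -> (forall i, phi (r i) = u i) ->
  {in S, forall x, phi x = 0 -> x = 0}.
Proof.
move=> span_u indep_u rS phi_r x xS phix; apply/eqP/negPn/negP => nz_x.
suff : (n.+1 <= #|'I_n|)%N by rewrite card_ord ltnn.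
apply: (independent_card_le (w := extend r x) span_u).
  by move=> i; rewrite /extend; case: unliftP.
move=> c cB; rewrite combination_extend => rel.
have rel_u : combination u (fun i => c (lift ord_max i)) = 0.
  have := congr1 phi rel; rewrite raddf0 raddfD /= phi_act // phix ract0l addr0.
  rewrite phi_combination // => <-.
  by apply: eq_bigr => i _; rewrite /= phi_r.
have c_lift0 i : c (lift ord_max i) = 0 := indep_u _ (fun i => cB _) rel_u i.
have xc0 : act x (c ord_max) = 0.
  by rewrite -rel /combination big1 ?add0r // => j _; rewrite c_lift0 raddf0.
move=> i; case: (unliftP ord_max i) => [j ->|->]; first exact: c_lift0.
apply/eqP; apply: contraNT nz_x => nz_c; apply/eqP.
by rewrite -[x](ract1 act) -(mulrV (K_division nz_c)) -ractA xc0 ract0l.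
Qed.

End LinearMap.
End RightVectorSpace.

(** * Skew polynomials *)

Lemma size_poly_coef_eq (R : nzSemiRingType) (p : {poly R}) n :
  (size p <= n.+1)%N -> p`_n != 0 -> size p = n.+1.
Proof.
move=> le_pn nz_pn; apply/eqP; rewrite eqn_leq le_pn ltnNge.
by apply: contra nz_pn => le_p; rewrite nth_default.
Qed.

Lemma size_poly_coef_leq (R : nzSemiRingType) (p : {poly R}) n :
  (size p <= n.+1)%N -> p`_n = 0 -> (size p <= n)%N.
Proof.
move=> le_pn pn0; rewrite leqNgt; apply/negP => lt_np.
have size_p : size p = n.+1 by apply/eqP; rewrite eqn_leq le_pn lt_np.
have : lead_coef p == 0 by rewrite lead_coefE size_p pn0.
by rewrite lead_coef_eq0 -size_poly_eq0 size_p.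
Qed.

Lemma divring_closedT (R : unitRingType) : divring_closed (predT : {pred R}).
Proof. by []. Qed.

Section SkewPolynomials.
Variables (D : unitRingType) (sigma : {rmorphism D -> D}) (delta : D -> D).
Hypothesis D_division : division_ring D.
Hypothesis sigma_inj : injective sigma.
Hypothesis delta_derivation : left_sigma_derivation sigma delta.

Lemma deltaB : {morph delta : x y / x - y}.
Proof. by move=> x y; apply: (addIr (delta y)); rewrite -(proj1 delta_derivation) !subrK. Qed.
HB.instance Definition _ := GRing.isZmodMorphism.Build D D delta deltaB.

Lemma delta1 : delta 1 = 0.
Proof.
have /eqP := proj2 delta_derivation 1 1.
by rewrite !mulr1 rmorph1 mul1r eq_sym -subr_eq0 addrK => /eqP.
Qed.

Lemma iter_sigma_neq0 i c : c != 0 -> iter i sigma c != 0.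
Proof.
move=> nz_c; elim: i => //= i IHi; apply: contra IHi => /eqP sc0.
by apply/eqP/sigma_inj; rewrite sc0 rmorph0.
Qed.

Local Notation T := (tmul sigma delta).
Local Notation "p ** q" := (smul sigma delta p q) (at level 40, left associativity).
Implicit Types (p q r g h u d : {poly D}) (c : D).

Lemma coef_tmul q i : (T q)`_i = (if i is j.+1 then sigma q`_j else 0) + delta q`_i.
Proof. by rewrite /tmul coefD coefMX !coef_map; case: i. Qed.

Lemma tmulB : {morph T : p q / p - q}.
Proof. by move=> p q; rewrite /tmul !raddfB /= mulrBl opprD addrACA. Qed.
HB.instance Definition _ := GRing.isZmodMorphism.Build _ _ T tmulB.

Lemma tmulZ c q : T (c *: q) = sigma c *: T q + delta c *: q.
Proof.
apply/polyP => i; rewrite coef_tmul [RHS]coefD !coefZ coef_tmul (proj2 delta_derivation).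
rewrite mulrDr addrA.
by case: i => [|i]; rewrite ?coefZ ?rmorphM ?mulr0 ?add0r.
Qed.

Lemma tmulXn i : T 'X^i = 'X^(i.+1).
Proof.
apply/polyP => j; rewrite coef_tmul !coefXn.
have -> : delta (j == i)%:R = 0 by case: (_ == _); rewrite ?delta1 ?raddf0.
by case: j => [|j]; rewrite addr0 ?coefXn ?rmorph_nat.
Qed.

Lemma size_tmul_le q : (size (T q) <= (size q).+1)%N.
Proof.
apply/leq_sizeP => [[|j]] // le_qj.
by rewrite coef_tmul !nth_default ?rmorph0 ?raddf0 ?addr0 // leqW.
Qed.

Lemma size_lead_tmul q : q != 0 ->
  size (T q) = (size q).+1 /\ lead_coef (T q) = sigma (lead_coef q).
Proof.
move=> nz_q; have := nz_q; rewrite -lead_coef_eq0 lead_coefE.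
case size_q: (size q) => [|s] /= nz_qs; first by move: nz_q; rewrite -size_poly_eq0 size_q.
have top : (T q)`_s.+1 = sigma q`_s.
  by rewrite coef_tmul (nth_default 0 (n := s.+1)) ?size_q // raddf0 addr0.
have size_Tq : size (T q) = s.+2.
  by apply: size_poly_coef_eq; [rewrite -size_q size_tmul_le | rewrite top (iter_sigma_neq0 1)].
by rewrite lead_coefE size_Tq.
Qed.

Lemma size_lead_iter_tmul i q : q != 0 ->
  size (iter i T q) = (size q + i)%N /\ lead_coef (iter i T q) = iter i sigma (lead_coef q).
Proof.
move=> nz_q; elim: i => [|i [IHs IHl]] /=; first by rewrite addn0.
have nz : iter i T q != 0 by rewrite -size_poly_gt0 IHs addn_gt0 size_poly_gt0 nz_q.
by have [-> ->] := size_lead_tmul nz; rewrite IHs IHl addnS.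
Qed.

Lemma size_iter_tmul_le i q : (size (iter i T q) <= size q + i)%N.
Proof.
elim: i => [|i IHi] /=; first by rewrite addn0.
by rewrite addnS (leq_trans (size_tmul_le _)).
Qed.

Lemma iter_tmulB i : {morph iter i T : p q / p - q}.
Proof. by move=> p q; elim: i => //= i ->; rewrite raddfB. Qed.

Lemma smulE n p q : (size p <= n)%N -> p ** q = \sum_(i < n) p`_i *: iter i T q.
Proof.
move=> le_pn; rewrite /smul (big_ord_widen n (fun i => p`_i *: iter i T q) le_pn) big_mkcond.
by apply: eq_bigr => i _; case: ltnP => // /(nth_default 0) ->; rewrite scale0r.
Qed.

Lemma smulDl p1 p2 q : (p1 + p2) ** q = p1 ** q + p2 ** q.
Proof.
rewrite (smulE q (size_polyD p1 p2)) (smulE q (leq_maxl (size p1) (size p2))).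
rewrite (smulE q (leq_maxr (size p1) (size p2))).
by rewrite -big_split; apply: eq_bigr => i _; rewrite coefD scalerDl.
Qed.

Lemma smulZl c p q : (c *: p) ** q = c *: (p ** q).
Proof.
rewrite (smulE q (size_scale_leq c p)) (smulE q (leqnn _)) scaler_sumr.
by apply: eq_bigr => i _; rewrite coefZ scalerA.
Qed.

Lemma smulNl p q : (- p) ** q = - (p ** q).
Proof. by rewrite -scaleN1r smulZl scaleN1r. Qed.

Lemma smulBl p1 p2 q : (p1 - p2) ** q = p1 ** q - p2 ** q.
Proof. by rewrite smulDl smulNl. Qed.

Lemma smul0l q : 0 ** q = 0.
Proof. by rewrite /smul size_poly0 big_ord0. Qed.

Lemma smul_suml (I : finType) (F : I -> {poly D}) q : (\sum_i F i) ** q = \sum_i F i ** q.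
Proof. exact: (big_morph (smul sigma delta ^~ q) (fun p1 p2 => smulDl p1 p2 q) (smul0l q)). Qed.

Lemma smulBr p : {morph smul sigma delta p : q r / q - r}.
Proof.
by move=> q r; rewrite /smul -sumrB; apply: eq_bigr => i _; rewrite iter_tmulB scalerBr.
Qed.
HB.instance Definition _ p := GRing.isZmodMorphism.Build _ _ (smul sigma delta p) (smulBr p).

Lemma smulDr p : {morph smul sigma delta p : q r / q + r}.
Proof. exact: raddfD. Qed.

Lemma smulC c q : c%:P ** q = c *: q.
Proof. by rewrite (smulE q (size_polyC_leq1 c)) big_ord1 coefC. Qed.

Lemma smul1l q : 1 ** q = q.
Proof. by rewrite -polyC1 smulC scale1r. Qed.

Lemma smulXn i q : 'X^i ** q = iter i T q.
Proof.
rewrite (smulE q (leqnn _)) size_polyXn big_ord_recr /= coefXn eqxx scale1r big1 ?add0r //.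
by move=> j _; rewrite coefXn (ltn_eqF (ltn_ord j)) scale0r.
Qed.

Lemma smul1r p : p ** 1 = p.
Proof.
have iterT1 i : iter i T 1 = 'X^i by elim: i => //= i ->; rewrite tmulXn.
by rewrite /smul; under eq_bigr => i _ do rewrite iterT1; rewrite -poly_def coefK.
Qed.

Lemma smul_tmul q r : T q ** r = T (q ** r).
Proof.
rewrite (smulE r (size_tmul_le q)) (smulE r (leqnn (size q))) raddf_sum /=.
under eq_bigr => i _ do rewrite coef_tmul scalerDl.
rewrite big_split /= big_ord_recl /= scale0r add0r big_ord_recr /=.
rewrite (nth_default 0 (leqnn _)) raddf0 scale0r addr0 -big_split /=.
by apply: eq_bigr => i _; rewrite tmulZ.
Qed.

Lemma smulA p q r : p ** q ** r = p ** (q ** r).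
Proof.
have smul_iter i q' : iter i T q' ** r = iter i T (q' ** r).
  by elim: i => //= i <-; rewrite smul_tmul.
rewrite [p ** q]/smul smul_suml [RHS]/smul; apply: eq_bigr => i _.
by rewrite smulZl smul_iter.
Qed.

Lemma smul_size p q : p != 0 -> q != 0 -> size (p ** q) = (size p + size q).-1.
Proof.
move=> nz_p nz_q; have := nz_p; rewrite -lead_coef_eq0 lead_coefE.
case size_p: (size p) => [|s] /= nz_ps; first by move: nz_p; rewrite -size_poly_eq0 size_p.
have size_top : size (p`_s *: iter s T q) = (size q + s)%N.
  by rewrite lreg_size ?(size_lead_iter_tmul s nz_q).1 //; exact/mulrI/D_division.
rewrite (smulE q (leqnn _)) size_p big_ord_recr /= addrC size_polyDl size_top.
  exact: addnC.
elim/big_ind: _ => [|x y ? ?|i _].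
- by rewrite size_poly0 ltn_addr // size_poly_gt0.
- by rewrite (leq_ltn_trans (size_polyD x y)) // gtn_max; apply/andP.
rewrite (leq_ltn_trans (size_scale_leq _ _)) // (leq_ltn_trans (size_iter_tmul_le _ _)) //.
by rewrite ltn_add2l.
Qed.

Lemma size_smul_le p q : (size (p ** q) <= (size p + size q).-1)%N.
Proof.
have [->|nz_p] := eqVneq p 0; first by rewrite smul0l size_poly0.
have [->|nz_q] := eqVneq q 0; first by rewrite raddf0 size_poly0.
by rewrite smul_size.
Qed.

Lemma size_smul_ge p q : p != 0 -> q != 0 -> (size q <= size (p ** q))%N.
Proof.
move=> nz_p nz_q; rewrite smul_size //.
by move: nz_p; rewrite -size_poly_gt0; case: (size p) => // n _; rewrite addSn leq_addl.
Qed.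

Lemma size_sub_smul_lead g d c k : d != 0 -> size g = (size d + k)%N ->
  c * iter k sigma (lead_coef d) = lead_coef g ->
  (size (g - (c *: 'X^k) ** d)%R < size g)%N.
Proof.
move=> nz_d size_g lead_g; rewrite smulZl smulXn.
have [size_r lead_r] := size_lead_iter_tmul k nz_d.
have g_gt0 : (0 < size g)%N by rewrite size_g addn_gt0 size_poly_gt0 nz_d.
rewrite -(prednK g_gt0) ltnS; apply: size_poly_coef_leq.
  rewrite (prednK g_gt0) (leq_trans (size_polyD _ _)) // geq_max leqnn size_polyN.
  by rewrite (leq_trans (size_scale_leq _ _)) // size_r size_g.
rewrite coefB coefZ -lead_coefE size_g -size_r -lead_coefE lead_r lead_g.
exact: subrr.
Qed.

Lemma skew_rdiv g d : d != 0 -> exists u r, g = u ** d + r /\ (size r < size d)%N.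
Proof.
move=> nz_d; elim: {g}(size g).+1 {-2}g (ltnSn (size g)) => // n IHn g lt_gn.
have [lt_gd|le_dg] := ltnP (size g) (size d); first by exists 0, g; rewrite smul0l add0r.
set k := (size g - size d)%N.
pose c := lead_coef g * (iter k sigma (lead_coef d))^-1.
have lead_g : c * iter k sigma (lead_coef d) = lead_coef g.
  by rewrite mulrVK // D_division // iter_sigma_neq0 // lead_coef_eq0.
have lt_g' := size_sub_smul_lead nz_d (esym (subnKC le_dg)) lead_g.
have [u [r [def_g' small_r]]] := IHn _ (leq_trans lt_g' lt_gn).
by exists (u + c *: 'X^k), r; rewrite smulDl -addrAC -def_g' subrK.
Qed.

Lemma skew_rmod_unique d u1 r1 u2 r2 : d != 0 -> u1 ** d + r1 = u2 ** d + r2 ->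
  (size r1 < size d)%N -> (size r2 < size d)%N -> r1 = r2.
Proof.
move=> nz_d eq_ur small1 small2.
have def_u : (u1 - u2) ** d = r2 - r1.
  by rewrite smulBl; apply/eqP; rewrite subr_eq [r2 - r1 + _]addrC addrA -eq_ur addrK.
have [eq_u|nz_u] := eqVneq (u1 - u2) 0.
  by apply/eqP; rewrite -subr_eq0 -opprB oppr_eq0 -def_u eq_u smul0l.
have : (size (r2 - r1)%R < size d)%N.
  by rewrite (leq_ltn_trans (size_polyD _ _)) // size_polyN gtn_max small2 small1.
by rewrite -def_u ltnNge size_smul_ge.
Qed.

(* the left D-vector space structure of D[t], as a right action of the opposite ring *)
Definition left_scaling : right_action D^c {poly D} :=
  @RightAction _ _ (fun p (c : D^c) => (c : D) *: p)
    (fun c : D^c => @scalerDr D _ c) (fun p (c d : D^c) => @scalerBl D _ c d p)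
    (fun p (c d : D^c) => @scalerA D _ d c p) (@scale1r D _).

Lemma independent_Xn n : independent predT left_scaling (fun i : 'I_n => 'X^i).
Proof.
move=> c _ sum0 i; have := congr1 (fun p => p`_i) sum0.
rewrite coef_sum coef0 (bigD1 i) //= coefZ coefXn eqxx mulr1 big1 ?addr0 // => j ne_ji.
have ne_ji_nat : (j : nat) != i := ne_ji.
by rewrite coefZ coefXn eq_sym (negbTE ne_ji_nat) mulr0.
Qed.

Lemma smul_polyCB p : {morph (fun c => p ** c%:P) : c d / c - d}.
Proof. by move=> c d; rewrite polyCB smulBr. Qed.

Lemma smul_polyCA p (c d : D) : p ** c%:P ** d%:P = p ** (c * d)%:P.
Proof. by rewrite smulA smulC -mul_polyC -polyCM. Qed.

Lemma smul_polyC1 p : p ** 1%:P = p.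
Proof. by rewrite polyC1 smul1r. Qed.

Definition right_constant_scaling : right_action D {poly D} :=
  RightAction (fun c p q => smulDl p q c%:P) smul_polyCB smul_polyCA smul_polyC1.

Lemma coef_iter_tmulC i c : (iter i T c%:P)`_i = iter i sigma c.
Proof.
have [->|nz_c] := eqVneq c 0.
  by rewrite polyC0 (iter_fix _ (raddf0 (tmul sigma delta))) (iter_fix _ (rmorph0 _)) coef0.
have nz_cP : c%:P != 0 by rewrite polyC_eq0.
have [size_r lead_r] := size_lead_iter_tmul i nz_cP.
by move: lead_r; rewrite lead_coefE size_r size_polyC nz_c add1n lead_coefC.
Qed.

Lemma right_coefficients : bijective sigma ->
  forall s (x : {poly D}), (size x <= s)%N ->
  exists e : nat -> D, x = \sum_(i < s) 'X^i ** (e i)%:P.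
Proof.
case=> sigma_inv _ sigma_invK.
have iter_onto i y : iter i sigma (iter i sigma_inv y) = y.
  elim: i y => //= i IHi y.
  by rewrite -[sigma_inv (iter i _ y)]iterS iterSr IHi sigma_invK.
elim=> [|s IHs] x le_xs.
  by exists (fun=> 0); rewrite big_ord0; move: le_xs; rewrite leqn0 size_poly_eq0 => /eqP.
pose y := iter s sigma_inv x`_s.
have [|e def_x'] := IHs (x - 'X^s ** y%:P).
  apply: size_poly_coef_leq; last by rewrite coefB smulXn coef_iter_tmulC iter_onto subrr.
  rewrite (leq_trans (size_polyD _ _)) // geq_max le_xs size_polyN smulXn.
  by rewrite (leq_trans (size_iter_tmul_le _ _)) // -add1n leq_add2r size_polyC_leq1.
exists (fun i => if i == s then y else e i).
rewrite big_ord_recr /= eqxx -[x](subrK ('X^s ** y%:P)) def_x'; congr (_ + _).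
by apply: eq_bigr => i _; rewrite (ltn_eqF (ltn_ord i)).
Qed.

Lemma subalgebra_divring_closed B :
  is_subalgebra sigma delta B -> free_finite_right B -> divring_closed B.
Proof.
move=> [B1 [BD [BN [BM _]]]] [n [d [span_d free_d]]].
have B0 : 0 \in B by rewrite -(subrr 1) BD ?BN.
have BV y : y \in B -> y^-1 \in B.
  move=> By; have [->|nz_y] := eqVneq y 0; first by rewrite invr0.
  case: n d span_d free_d => [|n] d span_d free_d.
    by have [b [_ /eqP]] := span_d 1; rewrite big_ord0 oner_eq0.
  have [c [Bc def_c]] := span_d (d ord0 * y^-1).
  pose b i := c i * y - (i == ord0)%:R.
  have /(_ ord0) : forall i, b i = 0.
    apply: free_d => [i|]; first by rewrite BD ?BM ?BN //; case: (_ == _).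
    rewrite /b; under eq_bigr => i _ do rewrite mulrBr mulrA.
    rewrite sumrB -mulr_suml -def_c mulrVK ?D_division // (bigD1 ord0) //= mulr1.
    by rewrite big1 ?addr0 ?subrr // => i /negbTE ->; rewrite mulr0.
  rewrite /b eqxx mulr1n => /eqP; rewrite subr_eq0 => /eqP cy1.
  by rewrite -[y^-1]mul1r -cy1 mulrK ?D_division.
by split=> // x y Bx By; rewrite ?BD ?BM ?BN ?BV.
Qed.

(** * Division by a monic polynomial and the algebra S_f *)

Section MonicModulus.
Variable f : {poly D}.
Hypothesis f_monic : f \is monic.
Local Notation rmod g := (srmod sigma delta g f).

Lemma f_neq0 : f != 0. Proof. exact: monic_neq0. Qed.

Lemma rmodf_spec n g : (size g <= n + (size f).-1)%N ->
  exists2 u, g = u ** f + rmodf sigma delta f n g & (size (rmodf sigma delta f n g) < size f)%N.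
Proof.
elim: n g => [|n IHn] g le_g /=.
  by exists 0; rewrite ?smul0l ?add0r // (leq_ltn_trans le_g) // ltn_predL size_poly_gt0 f_neq0.
case: ltnP => [lt_gf|le_fg]; first by exists 0; rewrite ?smul0l ?add0r.
have lead_g : lead_coef g * iter (size g - size f) sigma (lead_coef f) = lead_coef g.
  by rewrite (monicP f_monic) iter_fix ?rmorph1 ?mulr1.
have lt_g' := size_sub_smul_lead f_neq0 (esym (subnKC le_fg)) lead_g.
have [|u def_g' small] := IHn (g - (lead_coef g *: 'X^(size g - size f)) ** f).
  by rewrite -ltnS -addSn (leq_trans lt_g' le_g).
by exists (u + lead_coef g *: 'X^(size g - size f)); rewrite // smulDl -addrAC -def_g' subrK.
Qed.

Lemma srmod_spec g : exists2 u, g = u ** f + rmod g & (size (rmod g) < size f)%N.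
Proof. exact/rmodf_spec/leq_addr. Qed.

Lemma srmod_eq g u r : g = u ** f + r -> (size r < size f)%N -> rmod g = r.
Proof.
move=> def_g small_r; have [u' def_g' small'] := srmod_spec g.
exact: skew_rmod_unique f_neq0 (etrans (esym def_g') def_g) small' small_r.
Qed.

Lemma srmod_small g : (size g < size f)%N -> rmod g = g.
Proof. by apply: (srmod_eq (u := 0)); rewrite smul0l add0r. Qed.

Lemma srmodB : {morph srmod sigma delta ^~ f : g h / g - h}.
Proof.
move=> g h; have [u def_g small_g] := srmod_spec g; have [v def_h small_h] := srmod_spec h.
apply: (srmod_eq (u := u - v)); first by rewrite smulBl {1}def_g {1}def_h opprD addrACA.
by rewrite (leq_ltn_trans (size_polyD _ _)) // size_polyN gtn_max small_g small_h.
Qed.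

Lemma srmodZ c g : rmod (c *: g) = c *: rmod g.
Proof.
have [u def_g small_g] := srmod_spec g.
apply: (srmod_eq (u := c *: u)); first by rewrite smulZl {1}def_g scalerDr.
exact: leq_ltn_trans (size_scale_leq _ _) small_g.
Qed.

Lemma mem_Sf g : (g \in inSf f) = (size g < size f)%N.
Proof. by []. Qed.

Lemma Sf_zmod : zmod_closed (inSf f).
Proof.
split=> [|g h]; rewrite !mem_Sf ?size_poly0 ?size_poly_gt0 ?f_neq0 // => Sg Sh.
by rewrite (leq_ltn_trans (size_polyD _ _)) // size_polyN gtn_max Sg Sh.
Qed.

Lemma size_Sf g : inSf f g -> (size g <= (size f).-1)%N.
Proof. by move=> Sg; rewrite -ltnS (ltn_predK Sg). Qed.

Lemma Sf_spanning_Xn : spanning predT left_scaling (inSf f) (fun i : 'I_(size f).-1 => 'X^i).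
Proof.
move=> g Sg; exists (fun i : 'I__ => g`_i) => //; rewrite /combination /= -poly_def.
apply/polyP => i; rewrite coef_poly; case: ltnP => // le_fi.
by rewrite nth_default // (leq_trans (size_Sf Sg)).
Qed.

Lemma Sf_Xn (i : 'I_(size f).-1) : inSf f 'X^i.
Proof. by rewrite /inSf size_polyXn -ltn_predRL. Qed.

Lemma Sf_mulSf g h : inSf f (mulSf sigma delta f g h).
Proof. by have [] := srmod_spec (g ** h). Qed.

Lemma Sf_scale : {in inSf f, forall x (c : D^c), c \in predT -> inSf f (left_scaling x c)}.
Proof. by move=> x Sx c _; apply: leq_ltn_trans (size_scale_leq _ _) Sx. Qed.

Lemma Sf_rconst : {in inSf f, forall x c, inSf f (right_constant_scaling x c)}.
Proof.
move=> x Sx c; apply: leq_ltn_trans (size_smul_le _ _) _.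
by rewrite (leq_ltn_trans _ Sx) // -subn1 leq_subLR addnC leq_add2r size_polyC_leq1.
Qed.

Lemma mulSf_subl h : {morph (fun x => mulSf sigma delta f x h) : x y / x - y}.
Proof. by move=> x y; rewrite /mulSf smulBl srmodB. Qed.

Lemma mulSf_subr g : {morph mulSf sigma delta f g : x y / x - y}.
Proof. by move=> x y; rewrite /mulSf raddfB srmodB. Qed.

Lemma mulSf_scalel h : {in inSf f, forall x (c : D^c), c \in predT ->
  mulSf sigma delta f (left_scaling x c) h = left_scaling (mulSf sigma delta f x h) c}.
Proof. by move=> x _ c _; rewrite /mulSf /= smulZl srmodZ. Qed.

Hypothesis f_irr : sirreducible sigma delta f.

Lemma left_Bezout h : h != 0 -> (size h < size f)%N -> exists b g, b ** h = 1 + g ** f.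
Proof.
move=> nz_h lt_hf.
pose in_ideal x := exists b g, x = b ** h + g ** f.
have ideal_sub x y u : in_ideal x -> in_ideal y -> in_ideal (x - u ** y).
  move=> [b1 [g1 ->]] [b2 [g2 ->]]; exists (b1 - u ** b2), (g1 - u ** g2).
  by rewrite smulDr !smulBl !smulA opprD addrACA.
have Ih : in_ideal h by exists 1, 0; rewrite smul1l smul0l addr0.
have If : in_ideal f by exists 0, 1; rewrite smul1l smul0l add0r.
have [n [[d [Id nz_d size_d]] min_n]] :=
  @ex_minimal (fun n => exists d, [/\ in_ideal d, d != 0 & size d = n])
    (ex_intro _ _ (ex_intro _ h (And3 Ih nz_h erefl))).
(* [d] generates the left ideal; as it right-divides the irreducible [f], it is constant *)
have ideal_mul x : in_ideal x -> exists u, x = u ** d.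
  move=> Ix; have [u [r [def_x small_r]]] := skew_rdiv x nz_d.
  exists u; have [r0|nz_r] := eqVneq r 0; first by rewrite def_x r0 addr0.
  have Ir : in_ideal r.
    have -> : r = x - u ** d by rewrite def_x addrAC subrr add0r.
    exact: ideal_sub.
  by have := min_n _ (ex_intro _ r (And3 Ir nz_r erefl)); rewrite -size_d leqNgt small_r.
have [u def_f] := ideal_mul f If.
have [v def_h] := ideal_mul h Ih.
have nz_u : u != 0 by apply: contraNneq f_neq0 => u0; rewrite def_f u0 smul0l.
have nz_v : v != 0 by apply: contraNneq nz_h => v0; rewrite def_h v0 smul0l.
have le_dh : (size d <= size h)%N by rewrite def_h size_smul_ge.
have /size1_polyC def_dc : (size d <= 1)%N.
  rewrite leqNgt; apply/negP => gt_d1; apply: (proj2 f_irr); exists u, d.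
  split=> //; split; last exact: leq_ltn_trans le_dh lt_hf.
  rewrite def_f smul_size //; move: gt_d1; case: (size d) => [|[|s]] // _.
  by rewrite addnS /= addnS ltnS leq_addr.
set c := d`_0 in def_dc.
have nz_c : c != 0 by apply: contraNneq nz_d => c0; rewrite def_dc c0.
have [b [g def_d]] := Id.
exists (c^-1 *: b), (- (c^-1 *: g)); rewrite smulNl !smulZl.
apply/eqP; rewrite eq_sym subr_eq -scalerDr -def_d def_dc -mul_polyC -polyCM.
by rewrite mulVr ?polyC1 //; apply: D_division.
Qed.

Lemma Sf_mul_neq0 g h : inSf f g -> inSf f h -> g != 0 -> h != 0 ->
  mulSf sigma delta f g h != 0.
Proof.
move=> Sg Sh nz_g nz_h; apply/eqP => gh0.
have [q def_gh _] := srmod_spec (g ** h); rewrite -/(mulSf _ _ _ _ _) gh0 addr0 in def_gh.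
have [b [g' bezout]] := left_Bezout nz_h Sh.
(* [p b = u g + r] and [g h \in D[t] f] give [r h = p b h = p] modulo [f] *)
have preimage p : inSf f p -> exists2 r, inSf f r & mulSf sigma delta f r h = p.
  move=> Sp; have [u [r [def_pb small_r]]] := skew_rdiv (p ** b) nz_g.
  exists r; first exact: ltn_trans small_r Sg.
  apply: (srmod_eq (u := p ** g' - u ** q)) Sp.
  have -> : r = p ** b - u ** g by rewrite def_pb addrAC subrr add0r.
  rewrite smulBl !smulA bezout def_gh smulDr smul1r smulBl !smulA.
  by rewrite [RHS]addrC [RHS]addrA.
have [r Sr def_r] := fin_all_exists2 (fun i : 'I_(size f).-1 => preimage 'X^i (Sf_Xn i)).
have R_h_inj := surjective_injective (K := D^c) D_division (divring_closedT _) (S := inSf f)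
  (mulSf_subl h) (mulSf_scalel h) Sf_spanning_Xn (@independent_Xn (size f).-1) Sr def_r.
by move: nz_g; rewrite (R_h_inj g Sg gh0) eqxx.
Qed.

Lemma Sf_right_division a : inSf f a -> a != 0 -> forall b, inSf f b ->
  exists! x, inSf f x /\ mulSf sigma delta f x a = b.
Proof.
move=> Sa nz_a b Sb.
apply: (injective_surjective (K := D^c) D_division (divring_closedT _) Sf_zmod Sf_scale
  (mulSf_subl a) (fun x _ => Sf_mulSf x a) (mulSf_scalel a) Sf_spanning_Xn _ Sb).
by move=> x Sx; apply: contra_eq => nz_x; apply: Sf_mul_neq0.
Qed.

Section LeftDivision.
Hypothesis sigma_bij : bijective sigma.
Variable B : {pred D}.
Hypothesis B_sub : is_subalgebra sigma delta B.
Hypothesis B_nuc : forall b, b \in B -> in_right_nucleus sigma delta f b%:P.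
Hypothesis B_free : free_finite_right B.

Lemma Sf_spanning_right n (d : 'I_n -> D) :
  (forall x, exists b : 'I_n -> D, (forall i, b i \in B) /\ x = \sum_i d i * b i) ->
  spanning B right_constant_scaling (inSf f)
    (fun ij : 'I_(size f).-1 * 'I_n => 'X^(ij.1) ** (d ij.2)%:P).
Proof.
move=> span_d x Sx.
have [e ->] := right_coefficients sigma_bij (size_Sf Sx).
have [b Bb_def] := fin_all_exists (fun i : 'I_(size f).-1 => span_d (e i)).
exists (fun ij : 'I__ * 'I__ => b ij.1 ij.2) => [[i j]|]; first exact: (Bb_def i).1 j.
pose F (i : 'I_(size f).-1) (j : 'I_n) := 'X^i ** (d j)%:P ** (b i j)%:P.
rewrite /combination -(pair_bigA _ F) /=.
apply: eq_bigr => i _.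
rewrite (Bb_def i).2 rmorph_sum raddf_sum /=; apply: eq_bigr => j _.
by rewrite /F smul_polyCA.
Qed.

Lemma mulSf_rconst a : inSf f a -> {in inSf f, forall x c, c \in B ->
  mulSf sigma delta f a (right_constant_scaling x c) =
  right_constant_scaling (mulSf sigma delta f a x) c}.
Proof.
move=> Sa x Sx c Bc /=; have [_ nuc] := B_nuc Bc.
have small y : inSf f y -> mulSf sigma delta f y c%:P = y ** c%:P.
  by move=> Sy; rewrite /mulSf srmod_small //; apply: Sf_rconst.
by rewrite -small // -small ?Sf_mulSf // nuc.
Qed.

Lemma Sf_left_division a : inSf f a -> a != 0 -> forall b, inSf f b ->
  exists! x, inSf f x /\ mulSf sigma delta f a x = b.
Proof.
move=> Sa nz_a b Sb; have [n [d [span_d _]]] := B_free.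
apply: (injective_surjective D_division (subalgebra_divring_closed B_sub B_free) Sf_zmod
  (fun x Sx c _ => Sf_rconst Sx c) (mulSf_subr a) (fun x _ => Sf_mulSf a x) (mulSf_rconst Sa)
  (Sf_spanning_right span_d) _ Sb).
by move=> x Sx; apply: contra_eq => nz_x; apply: Sf_mul_neq0.
Qed.

Lemma Sf_division_nucleus : Sf_division sigma delta f.
Proof.
move=> a Sa nz_a.
by split; [exact: Sf_left_division | exact: Sf_right_division].
Qed.

End LeftDivision.
End MonicModulus.

Lemma subalgebraT : is_subalgebra sigma delta predT.
Proof. by do 4?split. Qed.

Lemma free_finite_rightT : free_finite_right (predT : {pred D}).
Proof.
exists 1%N, (fun=> 1); split=> [x|b _]; first by exists (fun=> x); rewrite big_ord1 mul1r.
by rewrite big_ord1 mul1r => b0 i; rewrite (ord1 i).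
Qed.

End SkewPolynomials.

Theorem mainTheorem11 (D : unitRingType) (sigma : {rmorphism D -> D})
  (delta : D -> D) (f : {poly D}) :
  division_ring D ->
  bijective sigma ->
  left_sigma_derivation sigma delta ->
  f \is monic -> (2 <= (size f).-1)%N ->
  sirreducible sigma delta f ->
  ((forall c : D, in_right_nucleus sigma delta f c%:P) ->
      Sf_division sigma delta f) /\
  (forall B : {pred D},
      is_subalgebra sigma delta B ->
      (forall b, b \in B -> in_right_nucleus sigma delta f b%:P) ->
      free_finite_right B ->
      Sf_division sigma delta f).
Proof.
move=> D_div sigma_bij delta_der f_monic _ f_irr.
have Sf_div := Sf_division_nucleus D_div (bij_inj sigma_bij) delta_der f_monic f_irr sigma_bij.
split=> [D_nuc|]; last exact: Sf_div.
apply: (Sf_div predT) => [|b _|]; first exact: subalgebraT; last exact: free_finite_rightT.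
exact: D_nuc.
Qed.
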